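(* Let $f:[a,b]\to\mathbb{Q}_Q(\mathbb{R}^n)$ be continuous, let $x_0\in(a,b)$, and suppose $f$ is strongly affinely approximatable at $x_0$. Then there exist continuous functions $f_1,\dots,f_Q:[a,b]\to\mathbb{R}^n$ such that $f(x)=\sum_{i=1}^Q[[f_i(x)]]$ for all $x\in[a,b]$ and each $f_i$ is differentiable at $x_0$.
   Context: $\mathbb{Q}_Q(\mathbb{R}^n)$ denotes the set of unordered $Q$-tuples $\sum_{i=1}^Q[[a_i]]$ of points of $\mathbb{R}^n$ (two such sums are equal iff the tuples agree up to a permutation), with metric $\mathcal{G}\big(\sum_i[[a_i]],\sum_i[[b_i]]\big)=\min_{\sigma}\big(\sum_{i}|a_i-b_{\sigma(i)}|^2\big)^{1/2}$ over permutations $\sigma$. A function $f:[a,b]\to\mathbb{Q}_Q(\mathbb{R}^n)$ is affinely approximatable at $x_0$ if there are affine maps $A_1,\dots,A_Q:\mathbb{R}\to\mathbb{R}^n$ with $\lim_{x\to x_0}\mathcal{G}\big(f(x),\sum_{i=1}^Q[[A_i(x)]]\big)/|x-x_0|=0$; it is strongly affinely approximatable at $x_0$ if moreover these maps can be chosen so that $A_i=A_j$ whenever $A_i(x_0)=A_j(x_0)$. *)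

From HB Require Import structures.
From mathcomp Require Import all_boot all_order all_algebra all_fingroup.
From mathcomp Require Import all_classical all_reals all_analysis.
Set Implicit Arguments. Unset Strict Implicit. Unset Printing Implicit Defensive.
Import Order.TTheory GRing.Theory Num.Theory.
Import numFieldNormedType.Exports.
Local Open Scope ring_scope.
Local Open Scope classical_set_scope.

(* An ordered representative of a point of Q_Q(R^n): a Q-tuple of row
   vectors.  Two representatives denote the same unordered Q-tuple iff
   they differ by a permutation of the indices ('S_Q). *)
Definition Qtuple (R : realType) (Q n : nat) := 'I_Q -> 'rV[R]_n.

Definition sqdist (R : realType) (n : nat) (u v : 'rV[R]_n) : R :=
  \sum_(j < n) (u 0 j - v 0 j) ^+ 2.

Definition Gsq (R : realType) (Q n : nat) (p q : Qtuple R Q n) (s : 'S_Q) : R :=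
  \sum_(i < Q) sqdist (p i) (q (s i)).

Definition Gdist (R : realType) (Q n : nat) (p q : Qtuple R Q n) : R :=
  Num.sqrt (\big[Num.min/Gsq p q 1%g]_(s : 'S_Q) Gsq p q s).

Definition Qcontinuous_on (R : realType) (Q n : nat) (a b : R)
    (f : R -> Qtuple R Q n) : Prop :=
  forall x, a <= x <= b -> forall e : R, 0 < e -> exists2 d : R, 0 < d &
    forall y, a <= y <= b -> `|y - x| < d -> Gdist (f y) (f x) < e.

Definition affine_map (R : realType) (n : nat) (A : R -> 'rV[R]_n) : Prop :=
  exists c v : 'rV[R]_n, forall x, A x = c + x *: v.

Definition approximates_at (R : realType) (Q n : nat) (a b : R)
    (f : R -> Qtuple R Q n) (x0 : R) (A : 'I_Q -> R -> 'rV[R]_n) : Prop :=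
  forall e : R, 0 < e -> exists2 d : R, 0 < d &
    forall x, a <= x <= b -> 0 < `|x - x0| < d ->
      Gdist (f x) (fun i => A i x) / `|x - x0| < e.

Definition affinely_approximatable (R : realType) (Q n : nat) (a b : R)
    (f : R -> Qtuple R Q n) (x0 : R) : Prop :=
  exists A : 'I_Q -> R -> 'rV[R]_n,
    (forall i, affine_map (A i)) /\ approximates_at a b f x0 A.

Definition strongly_affinely_approximatable (R : realType) (Q n : nat) (a b : R)
    (f : R -> Qtuple R Q n) (x0 : R) : Prop :=
  exists A : 'I_Q -> R -> 'rV[R]_n,
    [/\ forall i, affine_map (A i),
        approximates_at a b f x0 A &
        forall i j, A i x0 = A j x0 -> A i = A j].

From HB Require Import structures.
From mathcomp Require Import all_boot all_order all_algebra all_fingroup.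
From mathcomp Require Import all_classical all_reals all_analysis.
From mathcomp Require Import lra.
Import Order.TTheory GRing.Theory Num.Theory.
Import numFieldNormedType.Exports.
Local Open Scope ring_scope.
Local Open Scope classical_set_scope.

Set Implicit Arguments. Unset Strict Implicit. Unset Printing Implicit Defensive.

(* A continuous map into Q_Q(R^n) on a segment admits a continuous selection.
   We prove this for selections whose reorderings must preserve a labelling of
   the indices, by induction on the number of pairs of equally labelled
   indices.  Near a point y where f y is not constant on some label class, the
   values of f y split into well-separated clusters; labelling each index by
   its cluster refines the labelling, so by induction there is a selection
   near y.  Such local selections glue along segments (supremum argument), and
   by exhaustion over every connected component of the set of non-collapsed
   points; at collapsed points every reordering is continuous.

   Given a continuous selection g and a gap r between the distinct values
   A_i(x0), every branch g_k stays, near x0, within r/4 of some centre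
   A_j(x0); by the intermediate value theorem it is the same centre
   A_{s k}(x0) throughout.  Strong approximability then forces the affine map
   approximating g_k at every nearby x to be A_{s k} itself, so g_k is
   differentiable at x0. *)

Local Notation seg a b := [set x | a <= x <= b].

Section EpsContinuity.
Variables (R : realType) (V : normedModType R).
Implicit Types (A B J : set R) (h : R -> V).

Definition eps_continuous J h :=
  forall x, J x -> forall e : R, 0 < e -> exists2 d : R, 0 < d &
    forall y, J y -> `|y - x| < d -> `|h y - h x| < e.

Lemma eps_continuous_sub J J' h :
  J' `<=` J -> eps_continuous J h -> eps_continuous J' h.
Proof.
move=> sJ hc x /sJ Jx e e0; have [d d0 hd] := hc x Jx e e0.
by exists d => // y /sJ; apply: hd.
Qed.

Lemma eq_eps_continuous J h1 h2 :
  (forall x, J x -> h1 x = h2 x) -> eps_continuous J h1 -> eps_continuous J h2.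
Proof.
move=> h12 hc x Jx e e0; have [d d0 hd] := hc x Jx e e0.
by exists d => // y Jy yx; rewrite -!h12 //; apply: hd.
Qed.

Lemma eps_continuous_within J h : eps_continuous J h -> {within J, continuous h}.
Proof.
move=> hc; apply/subspace_continuousP => x Jx.
apply/cvgrPdist_lt => e e0; have [d d0 hd] := hc x Jx e e0.
rewrite near_withinE; apply/nbhs_ballP; exists d => //= y; rewrite /ball /= => xy Jy.
by rewrite distrC; apply: hd => //; rewrite distrC.
Qed.

Let eps_continuousU_at A B h x :
  eps_continuous A h -> eps_continuous B h ->
  (~ B x -> exists2 r, 0 < r & forall y, B y -> r <= `|y - x|) ->
  A x -> forall e : R, 0 < e -> exists2 d : R, 0 < d &
    forall y, (A `|` B) y -> `|y - x| < d -> `|h y - h x| < e.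
Proof.
move=> hA hB sep Ax e e0; have [dA dA0 hdA] := hA x Ax e e0.
have [dB dB0 hdB] : exists2 dB, 0 < dB & forall y, B y -> `|y - x| < dB ->
    `|h y - h x| < e.
  have [Bx|nBx] := pselect (B x); first exact: hB.
  have [r r0 hr] := sep nBx; exists r => // y By yx.
  by have := hr y By; rewrite leNgt yx.
exists (Num.min dA dB); first by rewrite lt_min dA0 dB0.
by move=> y [Ay|By]; rewrite lt_min => /andP[yA yB]; [apply: hdA | apply: hdB].
Qed.

Lemma eps_continuousU A B h :
  eps_continuous A h -> eps_continuous B h ->
  (forall x, A x -> ~ B x -> exists2 r, 0 < r & forall y, B y -> r <= `|y - x|) ->
  (forall x, B x -> ~ A x -> exists2 r, 0 < r & forall y, A y -> r <= `|y - x|) ->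
  eps_continuous (A `|` B) h.
Proof.
move=> hA hB sepA sepB x [Ax|Bx]; first exact: eps_continuousU_at (sepA x Ax) Ax.
by rewrite setUC; exact: eps_continuousU_at (sepB x Bx) Bx.
Qed.

Lemma eps_continuous_glue A B q h1 h2 :
  (forall x, A x -> x <= q) -> (forall x, B x -> q <= x) -> A q -> B q ->
  h1 q = h2 q ->
  eps_continuous A h1 -> eps_continuous B h2 ->
  eps_continuous (A `|` B) (fun x => if x <= q then h1 x else h2 x).
Proof.
move=> Aq Bq Aqq Bqq h12 c1 c2; apply: eps_continuousU.
- by apply: eq_eps_continuous c1 => x /Aq ->.
- apply: eq_eps_continuous c2 => x Bx; case: ifPn => // xq.
  by have -> : x = q by apply/eqP; rewrite eq_le xq Bq.
- move=> x Ax nBx; have xq : x < q.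
    by rewrite lt_neqAle Aq // andbT; apply/eqP => xq; apply: nBx; rewrite xq.
  exists (q - x); rewrite ?subr_gt0 // => y /Bq qy.
  by rewrite ger0_norm ?lerD2r //; lra.
- move=> x Bx nAx; have qx : q < x.
    by rewrite lt_neqAle Bq // andbT; apply/eqP => qx; apply: nAx; rewrite -qx.
  exists (x - q); rewrite ?subr_gt0 // => y /Aq yq.
  by rewrite ler0_norm ?opprB ?lerD2l ?lerN2 //; lra.
Qed.

End EpsContinuity.

Section Selection.
Variables (R : realType) (I : finType) (n : nat).
Local Notation V := 'rV[R]_n.
Implicit Types (lbl : I -> seq bool) (A B J : set R) (f F G : R -> I -> V).

(* A labelling restricts the admissible reorderings to the permutations
   preserving it.  Labels are bit sequences, so that refining a labelling by
   one more binary criterion is a cons. *)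
Definition lbl_preserving lbl (s : {perm I}) := forall i, lbl (s i) = lbl i.

Definition lbl_continuous lbl J f :=
  forall x, J x -> forall e : R, 0 < e -> exists2 d : R, 0 < d &
    forall y, J y -> `|y - x| < d ->
      exists2 s, lbl_preserving lbl s & forall i, `|f y i - f x (s i)| < e.

Definition selection lbl J f F :=
  (forall x, J x -> exists2 s, lbl_preserving lbl s & forall i, F x i = f x (s i))
  /\ forall i, eps_continuous J (F ^~ i).

Lemma lbl_preserving1 lbl : lbl_preserving lbl 1%g.
Proof. by move=> i; rewrite perm1. Qed.

Lemma lbl_preservingM lbl s t :
  lbl_preserving lbl s -> lbl_preserving lbl t -> lbl_preserving lbl (s * t)%g.
Proof. by move=> hs ht i; rewrite permM ht hs. Qed.

Lemma lbl_preservingV lbl s : lbl_preserving lbl s -> lbl_preserving lbl s^-1%g.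
Proof. by move=> hs i; rewrite -{2}(permKV s i) hs. Qed.

Lemma lbl_continuous_sub lbl J J' f :
  J' `<=` J -> lbl_continuous lbl J f -> lbl_continuous lbl J' f.
Proof.
move=> sJ fc x /sJ Jx e e0; have [d d0 hd] := fc x Jx e e0.
by exists d => // y /sJ; apply: hd.
Qed.

Lemma selection_sub lbl J J' f F :
  J' `<=` J -> selection lbl J f F -> selection lbl J' f F.
Proof.
move=> sJ [hF cF]; split=> [x /sJ|i]; first exact: hF.
exact: eps_continuous_sub (cF i).
Qed.

Lemma selection_perm lbl J f F p : lbl_preserving lbl p ->
  selection lbl J f F -> selection lbl J f (fun x i => F x (p i)).
Proof.
move=> hp [hF cF]; split=> [x Jx|i]; last exact: cF.
have [s hs eF] := hF x Jx.
by exists (p * s)%g => [|i]; [exact: lbl_preservingM | rewrite eF permM].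
Qed.

Lemma selection_match lbl J J' f F G q :
  selection lbl J f F -> selection lbl J' f G -> J q -> J' q ->
  exists2 p, lbl_preserving lbl p & forall i, G q (p i) = F q i.
Proof.
move=> [hF _] [hG _] Jq J'q; have [s hs eF] := hF q Jq; have [t ht eG] := hG q J'q.
exists (s * t^-1)%g => [|i]; first exact/lbl_preservingM/lbl_preservingV.
by rewrite eG eF permM permKV.
Qed.

Lemma selection_glue lbl A B f F G q :
  (forall x, A x -> x <= q) -> (forall x, B x -> q <= x) -> A q -> B q ->
  F q = G q -> selection lbl A f F -> selection lbl B f G ->
  selection lbl (A `|` B) f (fun x => if x <= q then F x else G x).
Proof.
move=> Aq Bq Aqq Bqq FG [hF cF] [hG cG]; split=> [x [Ax|Bx]|i].
- by rewrite Aq //; apply: hF.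
- case: ifPn => xq; last exact: hG.
  have -> : x = q by apply/eqP; rewrite eq_le xq Bq.
  exact: hF.
- have FGi : F q i = G q i by rewrite FG.
  have := eps_continuous_glue Aq Bq Aqq Bqq FGi (cF i) (cG i).
  by apply: eq_eps_continuous => x _; case: ifP.
Qed.

Lemma selection_cat lbl f F G a t u : a <= t <= u ->
  selection lbl (seg a t) f F -> selection lbl (seg t u) f G -> F t = G t ->
  selection lbl (seg a u) f (fun x => if x <= t then F x else G x).
Proof.
move=> /andP[le_at le_tu] sF sG FG.
have left_t x : seg a t x -> x <= t by case/andP.
have right_t x : seg t u x -> t <= x by case/andP.
have := selection_glue left_t right_t _ _ FG sF sG.
rewrite /= lexx le_at le_tu => /(_ isT isT); apply: selection_sub.
by move=> x /andP[ax xu]; have [xt|/ltW tx] := leP x t; [left|right]; apply/andP.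
Qed.

Lemma selection_catl lbl f F G a t u : a <= t <= u ->
  selection lbl (seg a t) f F -> selection lbl (seg t u) f G ->
  exists2 H, selection lbl (seg a u) f H & forall x, a <= x <= t -> H x = F x.
Proof.
move=> atu sF sG; case/andP: (atu) => le_at le_tu.
have [||p hp ep] := selection_match (q := t) sF sG; rewrite /= ?lexx ?le_at ?le_tu //.
have FG : F t = (fun i => G t (p i)) by apply/funext => i; rewrite ep.
eexists; first exact: selection_cat atu sF (selection_perm hp sG) FG.
by move=> x /andP[_ ->].
Qed.

Lemma selection_catr lbl f F G a t u : a <= t <= u ->
  selection lbl (seg a t) f F -> selection lbl (seg t u) f G ->
  exists2 H, selection lbl (seg a u) f H & forall x, t <= x <= u -> H x = G x.
Proof.
move=> atu sF sG; case/andP: (atu) => le_at le_tu.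
have [||p hp ep] := selection_match (q := t) sG sF; rewrite /= ?lexx ?le_at ?le_tu //.
eexists; first exact: selection_cat atu (selection_perm hp sF) sG (funext ep).
move=> x /andP[tx _]; case: ifPn => // xt.
have -> : x = t by apply/eqP; rewrite eq_le xt tx.
exact: funext ep.
Qed.

End Selection.

Section Segment.
Variables (R : realType) (I : finType) (n : nat).
Local Notation V := 'rV[R]_n.
Implicit Types (lbl : I -> seq bool) (J : set R) (f : R -> I -> V).

Definition locally_selectable lbl J f := forall y, J y ->
  exists2 d : R, 0 < d & exists F, selection lbl (J `&` [set x | `|x - y| <= d]) f F.

Lemma selection_segment lbl J f a b : is_interval J -> locally_selectable lbl J f ->
  J a -> J b -> a <= b -> exists F, selection lbl (seg a b) f F.
Proof.
move=> iJ hJ Ja Jb ab.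
have segJ x : a <= x <= b -> J x by apply: iJ.
pose T := [set t | a <= t <= b /\ exists F, selection lbl (seg a t) f F].
have Ta : T a.
  split; first by rewrite lexx ab.
  have [d d0 [F sF]] := hJ a Ja; exists F; apply: selection_sub sF.
  move=> x /andP[ax xa]; have -> : x = a by apply/eqP; rewrite eq_le ax xa.
  by split=> //=; rewrite subrr normr0 ltW.
have ubT : ubound T b by move=> t [/andP[_ ->]].
have supT : has_sup T by split; [exists a | exists b].
set s := sup T.
have [as_ sb] : a <= s /\ s <= b.
  by split; [exact: sup_upper_bound | exact: ge_sup (ex_intro _ a Ta) ubT].
have [d d0 [G sG]] := hJ s (segJ s (introT andP (conj as_ sb))).
have [t Tt st] := sup_adherent d0 supT; rewrite -/s in st.
have ts : t <= s := sup_upper_bound supT Tt.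
case: Tt => /andP[le_at tb] [F sF].
set u := Num.min b (s + d).
have tu : t <= u by rewrite le_min tb /=; lra.
have Tu : T u.
  split; first by rewrite ge_min lexx (le_trans le_at tu).
  have sGtu : selection lbl (seg t u) f G.
    apply: selection_sub sG => x /andP[tx xu]; split.
      by apply: segJ; rewrite (le_trans le_at tx) (le_trans xu) // ge_min lexx.
    move: xu; rewrite /= le_min => /andP[_ xu]; rewrite ler_norml; apply/andP.
    by split; lra.
  by have [H sH _] := selection_catl (introT andP (conj le_at tu)) sF sGtu; exists H.
have -> : b = u.
  have := sup_upper_bound supT Tu; rewrite -/s /u ge_min => /orP[bs|]; last lra.
  by rewrite min_l //; lra.
by case: Tu.
Qed.

End Segment.

Section Exhaustion.
Variable R : realType.
Implicit Types (J : set R) (A e m : R).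

Lemma ler_divSn A k k' : 0 <= A -> (k <= k')%N -> A / k'.+1%:R <= A / k.+1%:R.
Proof. by move=> A0 kk; rewrite ler_wpM2l // lef_pV2 ?posrE ?ltr0n // ler_nat. Qed.

Lemma divSn_le A k : 0 <= A -> A / k.+1%:R <= A.
Proof. by move=> A0; rewrite ler_pdivrMr ?ltr0n // ler_peMr // ler1n. Qed.

Lemma exists_divSn_lt A e : 0 <= A -> 0 < e -> exists k, A / k.+1%:R < e.
Proof.
move=> A0 e0; exists (Num.Def.archi_bound (A / e)).
rewrite ltr_pdivrMr ?ltr0n // -ltr_pdivrMl // mulrC.
by apply: lt_le_trans (archi_boundP (divr_ge0 A0 (ltW e0))) _; rewrite ler_nat.
Qed.

Lemma interval_exhaustion_up J m : is_interval J -> J m -> has_ubound J ->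
  exists be : nat -> R, [/\ forall k, J (be k) /\ m <= be k,
    {homo be : k k' / (k <= k')%N >-> k <= k'} &
    forall x, J x -> exists k, exists2 e, 0 < e &
      forall y, J y -> `|y - x| < e -> y <= be k].
Proof.
move=> iJ Jm ubJ; have supJ : has_sup J by split=> //; exists m.
set v := sup J; have mv : m <= v := sup_upper_bound supJ Jm.
have [Jv|nJv] := pselect (J v).
  exists (fun=> v); split=> [//|//|x Jx].
  by exists 0%N, 1 => // y Jy _; exact: sup_upper_bound.
have vm0 : 0 <= v - m by rewrite subr_ge0.
exists (fun k => v - (v - m) / k.+1%:R); split.
- move=> k; have vmk := divSn_le k vm0.
  have pos : 0 < (v - m) / k.+1%:R.
    rewrite divr_gt0 // subr_gt0 lt_neqAle mv andbT.
    by apply/eqP => mv'; apply: nJv; rewrite -mv'.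
  have [z Jz zv] := sup_adherent pos supJ.
  rewrite -/v in zv; move: vmk pos zv; set w := _ / _ => vmk pos zv.
  split; last lra.
  by apply: (iJ m z) => //; apply/andP; split; lra.
- by move=> k k' kk; rewrite lerD2l lerN2 ler_divSn.
- move=> x Jx; have xv : x < v.
    by rewrite lt_neqAle sup_upper_bound // andbT; apply/eqP => xv; apply: nJv; rewrite -xv.
  have [k hk] : exists k, (v - m) / k.+1%:R < v - x.
    by apply: exists_divSn_lt; rewrite // subr_gt0.
  exists k; move: hk; set w := _ / _ => hk.
  exists (v - w - x); first lra.
  by move=> y _; rewrite ltr_norml => /andP[_ ?]; lra.
Qed.

Lemma interval_exhaustion J m : is_interval J -> J m ->
  has_lbound J -> has_ubound J ->
  exists al be : nat -> R, [/\ forall k, [/\ J (al k), J (be k) & al k <= m <= be k],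
    {homo al : k k' / (k <= k')%N >-> k' <= k},
    {homo be : k k' / (k <= k')%N >-> k <= k'} &
    forall x, J x -> exists k, exists2 e, 0 < e &
      forall y, J y -> `|y - x| < e -> al k <= y <= be k].
Proof.
move=> iJ Jm lbJ ubJ; pose J' := [set y | J (- y)].
have [be [Jbe lebe cbe]] := interval_exhaustion_up iJ Jm ubJ.
have iJ' : is_interval J'.
  move=> x y Jx Jy z /andP[xz zy]; apply: (iJ (- y) (- x)) => //.
  by rewrite !lerN2 xz zy.
have J'm : J' (- m) by rewrite /J' /= opprK.
have ubJ' : has_ubound J' by case: lbJ => l hl; exists (- l) => y /hl; rewrite lerNr.
have [nal [Jal leal cal]] := interval_exhaustion_up iJ' J'm ubJ'.
exists (fun k => - nal k), be; split.
- move=> k; have [Jn mn] := Jal k; have [Jb mb] := Jbe k.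
  by split=> //; rewrite lerNl mn.
- by move=> k k' kk; rewrite lerN2 leal.
- exact: lebe.
- move=> x Jx; have J'x : J' (- x) by rewrite /J' /= opprK.
  have [k1 [e1 e10 h1]] := cal (- x) J'x.
  have [k2 [e2 e20 h2]] := cbe x Jx.
  exists (maxn k1 k2), (Num.min e1 e2); first by rewrite lt_min e10 e20.
  move=> y Jy; rewrite lt_min => /andP[y1 y2]; apply/andP; split.
    rewrite lerNl; apply: le_trans (leal _ _ (leq_maxl k1 k2)).
    by apply: h1; rewrite /J' /= ?opprK // addrC distrC.
  by apply: le_trans (h2 y Jy y2) (lebe _ _ (leq_maxr k1 k2)).
Qed.

End Exhaustion.

Section BoundedInterval.
Variables (R : realType) (I : finType) (n : nat).
Local Notation V := 'rV[R]_n.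
Implicit Types (lbl : I -> seq bool) (J : set R) (f g : R -> I -> V).

Lemma selection_extend lbl J f g a b a' b' :
  is_interval J -> locally_selectable lbl J f -> J a' -> J b' ->
  a' <= a <= b -> b <= b' -> selection lbl (seg a b) f g ->
  exists2 g', selection lbl (seg a' b') f g' & forall x, a <= x <= b -> g' x = g x.
Proof.
move=> iJ hJ Ja' Jb' /andP[a'a ab] bb' sg.
have Ja : J a by apply: (iJ a' b'); rewrite // a'a (le_trans ab).
have Jb : J b by apply: (iJ a' b'); rewrite // bb' (le_trans a'a).
have [Fl sFl] := selection_segment iJ hJ Ja' Ja a'a.
have [H1 sH1 eH1] := selection_catr (introT andP (conj a'a ab)) sFl sg.
have [Fr sFr] := selection_segment iJ hJ Jb Jb' bb'.
have a'b : a' <= b by apply: le_trans ab.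
have [H sH eH] := selection_catl (introT andP (conj a'b bb')) sH1 sFr.
exists H => // x /andP[ax xb].
by rewrite eH ?eH1 ?ax ?xb // (le_trans a'a ax).
Qed.

Lemma selection_of_coherent lbl J f (S : nat -> set R) (gs : nat -> R -> I -> V) :
  (forall k, S k `<=` S k.+1) ->
  (forall x, J x -> exists k, exists2 e, 0 < e &
     forall y, J y -> `|y - x| < e -> S k y) ->
  (forall k, selection lbl (S k) f (gs k)) ->
  (forall k x, S k x -> gs k.+1 x = gs k x) ->
  exists F, selection lbl J f F.
Proof.
move=> Sinc cover sgs gsS.
have Smono k j : S k `<=` S (j + k)%N by elim: j => [//|j ih] x /ih /Sinc.
have gs_coh k j x : S k x -> gs (j + k)%N x = gs k x.
  by move=> Skx; elim: j => [//|j ih]; rewrite addSn gsS ?ih //; apply: Smono.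
have gs_eq k k' x : S k x -> S k' x -> gs k x = gs k' x.
  move=> Skx Sk'x; have [kk|/ltnW kk] := leqP k k'.
    by rewrite -(subnK kk) gs_coh.
  by rewrite -(subnK kk) gs_coh.
have Sx x : exists k, J x -> S k x.
  have [Jx|] := pselect (J x); last by exists 0%N.
  have [k [e e0 he]] := cover x Jx; exists k => _.
  by apply: he => //; rewrite subrr normr0.
have [N hN] := choice Sx.
exists (fun x => gs (N x) x); split=> [x Jx|i x Jx e e0].
  by have [s hs es] := proj1 (sgs (N x)) x (hN x Jx); exists s.
have [k [e1 e10 he1]] := cover x Jx.
have Skx : S k x by apply: he1 => //; rewrite subrr normr0.
have [e2 e20 he2] := proj2 (sgs k) i x Skx e e0.
exists (Num.min e1 e2); first by rewrite lt_min e10 e20.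
move=> y Jy; rewrite lt_min => /andP[y1 y2]; have Sky := he1 y Jy y1.
by rewrite (gs_eq _ k y (hN y Jy) Sky) (gs_eq _ k x (hN x Jx) Skx); apply: he2.
Qed.

Lemma selection_bounded_interval lbl J f : is_interval J ->
  has_lbound J -> has_ubound J -> locally_selectable lbl J f ->
  exists F, selection lbl J f F.
Proof.
move=> iJ lbJ ubJ hJ.
have [[m Jm]|J0] := pselect (J !=set0); last first.
  by exists f; split=> [x Jx|i x Jx]; exfalso; apply: J0; exists x.
have [al [be [Jk alk bek cover]]] := interval_exhaustion iJ Jm lbJ ubJ.
have le_albe k : al k <= be k by have [_ _ /andP[h1 h2]] := Jk k; exact: le_trans h2.
pose S k := seg (al k) (be k).
have ext p : exists g', selection lbl (S p.1) f p.2 ->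
    selection lbl (S p.1.+1) f g' /\ forall x, S p.1 x -> g' x = p.2 x.
  case: p => k g /=; have [sg|nsg] := pselect (selection lbl (S k) f g); last first.
    by exists f => /nsg.
  have [Ja Jb _] := Jk k.+1.
  have [g' sg' eg'] := selection_extend iJ hJ Ja Jb
    (introT andP (conj (alk _ _ (leqnSn k)) (le_albe k))) (bek _ _ (leqnSn k)) sg.
  by exists g' => _; split=> // x /andP[]; apply: eg'.
have [E hE] := choice ext.
have [g0 sg0] : exists g, selection lbl (S 0%N) f g.
  by have [Ja Jb _] := Jk 0%N; exact: selection_segment iJ hJ Ja Jb (le_albe 0%N).
pose gs := fix gs k := if k is k'.+1 then E (k', gs k') else g0.
have sgs k : selection lbl (S k) f (gs k).
  by elim: k => [//|k ih]; exact: (proj1 (hE (k, gs k) ih)).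
apply: (selection_of_coherent (S := S) (gs := gs)) => // [k x /andP[h1 h2]|k x Skx].
  by rewrite /S /= (le_trans (alk _ _ (leqnSn k)) h1) (le_trans h2 (bek _ _ (leqnSn k))).
exact: (proj2 (hE (k, gs k) (sgs k))).
Qed.

End BoundedInterval.

Definition between (R : realType) (x y z : R) := (x <= z <= y) || (y <= z <= x).

Lemma betweenC (R : realType) (x y z : R) : between x y z = between y x z.
Proof. by rewrite /between orbC. Qed.

Lemma between_r (R : realType) (x y : R) : between x y y.
Proof. by rewrite /between !lexx andbT /=; exact: le_total. Qed.

Lemma between_split (R : realType) (x y w z : R) :
  between x y z -> between x w z \/ between w y z.
Proof.
rewrite /between => /orP[]/andP[h1 h2]; have [wz|/ltW zw] := leP w z.
- by right; rewrite h2.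
- by left; rewrite h1 zw.
- by left; rewrite h2 orbT.
- by right; rewrite h1 zw orbT.
Qed.

Lemma between_dist (R : realType) (x y z : R) : between x y z -> `|z - x| <= `|y - x|.
Proof.
rewrite /between => /orP[]/andP[h1 h2]; have h12 := le_trans h1 h2.
  by rewrite !ger0_norm ?subr_ge0 // lerD2r.
by rewrite !ler0_norm ?subr_le0 // lerN2 lerD2r.
Qed.

Section FromLocal.
Variables (R : realType) (I : finType) (n : nat).
Local Notation V := 'rV[R]_n.
Variables (lbl : I -> seq bool) (c d : R) (f : R -> I -> V).

Definition lbl_constant (p : I -> V) := forall i j, lbl i = lbl j -> p i = p j.

Local Notation J := (seg c d).
Let U := [set y | J y /\ ~ lbl_constant (f y)].

Hypothesis fcont : lbl_continuous lbl J f.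
Hypothesis floc : forall y, U y ->
  exists2 de : R, 0 < de & exists F, selection lbl (J `&` [set x | `|x - y| <= de]) f F.

Let iJ : is_interval J.
Proof.
move=> x y /andP[cx _] /andP[_ yd] z /andP[xz zy].
by rewrite /= (le_trans cx xz) (le_trans zy yd).
Qed.

Let U_open y : U y -> exists2 de : R, 0 < de & forall z, J z -> `|z - y| < de -> U z.
Proof.
move=> [Jy nCy]; have [i /existsNP[j /not_implyP[lij nij]]] :
  exists i, ~ forall j, lbl i = lbl j -> f y i = f y j by apply/existsNP.
pose e := `|f y i - f y j| / 2.
have e0 : 0 < e by rewrite divr_gt0 // normr_gt0 subr_eq0; apply/eqP.
have [de de0 hde] := fcont Jy e0.
exists de => // z Jz zy; split=> // Cz.
have [s hs es] := hde z Jz zy; have si := es (s^-1 i)%g; have sj := es (s^-1 j)%g.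
rewrite permKV in sj.
rewrite permKV (Cz (s^-1 i)%g (s^-1 j)%g) ?(lbl_preservingV hs) // in si.
have : `|f y i - f y j| < e + e.
  apply: le_lt_trans (ler_distD (f z (s^-1 j)%g) _ _) _.
  by apply: ltrD; rewrite // distrC.
by rewrite -splitr ltxx.
Qed.

Let component x := [set y | forall z, between x y z -> U z].

Let component_U x y : component x y -> U y.
Proof. by apply; exact: between_r. Qed.

Let component_refl x : U x -> component x x.
Proof.
move=> Ux z; rewrite /between orbb => /andP[h1 h2].
by rewrite (@le_anti _ _ z x) ?h1 ?h2.
Qed.

Let component_interval x : is_interval (component x).
Proof.
move=> y1 y3 h1 h3 y2 /andP[h12 h23] z hz.
have [|h] := between_split y3 hz; first exact: h3.
have hz13 : between y1 y3 z.
  move: h; rewrite /between => /orP[]/andP[? ?]; apply/orP; left.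
    by apply/andP; split; lra.
  by apply/andP; split; lra.
have [h'|] := between_split x hz13; last exact: h3.
by apply: h1; rewrite betweenC.
Qed.

Let component_sub x : component x `<=` J.
Proof. by move=> y /component_U []. Qed.

Let component_locally_selectable x : locally_selectable lbl (component x) f.
Proof.
move=> y cy; have [de de0 [F sF]] := floc (component_U cy).
exists de => //; exists F; apply: selection_sub sF => z [cz hz].
by split; [exact: component_sub cz|].
Qed.

Let component_locally_constant x : U x -> exists2 de : R, 0 < de &
  forall y, J y -> `|y - x| < de -> U y /\ component y = component x.
Proof.
move=> Ux; have [de de0 hde] := U_open Ux; exists de => // y Jy yx.
have segU z : between x y z -> U z.
  move=> hz; apply: hde; last exact: le_lt_trans (between_dist hz) yx.
  by move: hz; rewrite /between => /orP[]/andP[? ?];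
    [apply: (iJ (proj1 Ux) Jy) | apply: (iJ Jy (proj1 Ux))]; apply/andP.
split; first exact/segU/between_r.
apply/seteqP; split=> w hw z hz.
  by have [h|h] := between_split y hz; [exact: segU | exact: hw].
have [h|h] := between_split x hz; last exact: hw.
by apply: segU; rewrite betweenC.
Qed.

Lemma selection_from_local : exists F, selection lbl J f F.
Proof.
have SKex (K : set R) : exists F, (exists2 x, U x & K = component x) -> selection lbl K f F.
  have [[x Ux ->]|nK] := pselect (exists2 x, U x & K = component x); last first.
    by exists f => /nK.
  have lbK : has_lbound (component x) by exists c => y /component_sub /andP[].
  have ubK : has_ubound (component x) by exists d => y /component_sub /andP[].
  have [F sF] := selection_bounded_interval (@component_interval x) lbK ubK
    (@component_locally_selectable x).
  by exists F.
have [SK hSK] := choice SKex.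
have sSK x : U x -> selection lbl (component x) f (SK (component x)).
  by move=> Ux; apply: hSK; exists x.
pose F x := if `[< U x >] then SK (component x) x else f x.
have FU x : U x -> F x = SK (component x) x by move=> Ux; rewrite /F asboolT.
have FnU x : ~ U x -> F x = f x by move=> nUx; rewrite /F asboolF.
have Fsel x : J x -> exists2 s, lbl_preserving lbl s & forall i, F x i = f x (s i).
  move=> Jx; have [Ux|nUx] := pselect (U x); last first.
    by exists 1%g => [|i]; [exact: lbl_preserving1 | rewrite FnU ?perm1].
  by rewrite FU //; exact: (proj1 (sSK x Ux) x (component_refl Ux)).
exists F; split=> // i x Jx e e0.
have [Ux|nUx] := pselect (U x).
  have [de1 de10 h1] := component_locally_constant Ux.
  have [de2 de20 h2] := proj2 (sSK x Ux) i x (component_refl Ux) e e0.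
  exists (Num.min de1 de2); first by rewrite lt_min de10 de20.
  move=> y Jy; rewrite lt_min => /andP[y1 y2]; have [Uy ceq] := h1 y Jy y1.
  by rewrite !FU // ceq; apply: h2 => //; rewrite -ceq; exact: component_refl.
(* At a collapsed point every admissible reordering fixes [f x]. *)
have Cx : lbl_constant (f x) by apply: contrapT => nC; apply: nUx.
have [de de0 hde] := fcont Jx e0; exists de => // y Jy yx.
have [s hs es] := hde y Jy yx; have [t ht et] := Fsel y Jy.
by rewrite (FnU x) // et -(Cx (s (t i)) i) ?hs ?ht.
Qed.

End FromLocal.

Lemma exists_gap (R : realType) (W : normedModType R) (T : finType) (u : T -> W) :
  exists2 r : R, 0 < r & forall i j, u i != u j -> r <= `|u i - u j|.
Proof.
exists (\big[Num.min/1]_(ij : T * T | u ij.1 != u ij.2) `|u ij.1 - u ij.2|).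
  by apply: lt_bigmin => // ij; rewrite normr_gt0 subr_eq0.
by move=> i j uij; exact: (@bigmin_le_cond _ _ _ _ (i, j)).
Qed.

Section Refinement.
Variables (R : realType) (I : finType) (n : nat).
Local Notation V := 'rV[R]_n.
Implicit Types (lbl : I -> seq bool) (b : I -> bool) (J : set R) (f : R -> I -> V).

Definition lbl_pairs lbl := #|[pred ij : I * I | lbl ij.1 == lbl ij.2]|.

Lemma lbl_pairs_cons lbl b i j : lbl i = lbl j -> b i != b j ->
  (lbl_pairs (fun k => b k :: lbl k) < lbl_pairs lbl)%N.
Proof.
move=> lij bij; apply: proper_card; apply/properP; split.
  by apply/fintype.subsetP => -[k l]; rewrite !inE /= => /eqP[_ ->].
by exists (i, j); rewrite !inE /= ?lij // eqseq_cons (negbTE bij).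
Qed.

Lemma lbl_preserving_cons lbl b s :
  lbl_preserving (fun k => b k :: lbl k) s -> lbl_preserving lbl s.
Proof. by move=> hs i; case: (hs i). Qed.

Lemma lbl_continuous_refine lbl J f y p (t : R -> {perm I}) r :
  0 < r -> (forall i, f y i != p -> r <= `|f y i - p|) -> lbl_continuous lbl J f ->
  (forall z, J z -> lbl_preserving lbl (t z) /\ forall i, `|f z (t z i) - f y i| < r / 4) ->
  lbl_continuous (fun i => (f y i == p) :: lbl i) J (fun z i => f z (t z i)).
Proof.
move=> r0 gap fcont ht x Jx e e0.
have [txl txe] := ht x Jx.
have e'0 : 0 < Num.min e (r / 4) by rewrite lt_min e0 divr_gt0.
have [d d0 hd] := fcont x Jx _ e'0; exists d => // z Jz zx.
have [tzl tze] := ht z Jz; have [u hu eu] := hd z Jz zx.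
have close i : `|f z (t z i) - f x (u (t z i))| < r / 4.
  by apply: lt_le_trans (eu _) _; rewrite ge_min lexx orbT.
(* [t x] and [t z] align [f x] and [f z] with [f y]; [u] aligns [f z] with [f x]. *)
exists (t z * u * (t x)^-1)%g => i; rewrite !permM; last first.
  by rewrite permKV; apply: lt_le_trans (eu _) _; rewrite ge_min lexx.
set j := ((t x)^-1 (u (t z i)))%g.
have lj : lbl j = lbl i by rewrite (lbl_preservingV txl) hu tzl.
have dj : `|f y j - f y i| < r.
  have hx : `|f x (u (t z i)) - f y j| < r / 4 by have := txe j; rewrite /j permKV.
  have h1 : `|f y j - f y i| <= `|f x (u (t z i)) - f y j| + `|f x (u (t z i)) - f y i|.
    by rewrite [X in _ <= X + _]distrC; exact: ler_distD.
  have h2 : `|f x (u (t z i)) - f y i| <=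
      `|f z (t z i) - f x (u (t z i))| + `|f z (t z i) - f y i|.
    by rewrite [X in _ <= X + _]distrC; exact: ler_distD.
  by move: (close i) (tze i); lra.
rewrite lj; congr (_ :: _).
have [ei|ei] := eqVneq (f y i) p; have [ej|ej] := eqVneq (f y j) p => //.
  by have := gap j ej; rewrite -ei; lra.
by have := gap i ei; rewrite -ej distrC; lra.
Qed.

Lemma selection_unrefine lbl b J f (t : R -> {perm I}) F :
  (forall z, J z -> lbl_preserving lbl (t z)) ->
  selection (fun i => b i :: lbl i) J (fun z i => f z (t z i)) F -> selection lbl J f F.
Proof.
move=> ht [hF cF]; split=> // x Jx; have [s hs es] := hF x Jx.
exists (s * t x)%g => [|i]; last by rewrite es permM.
exact: lbl_preservingM (lbl_preserving_cons hs) (ht x Jx).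
Qed.

End Refinement.

Section Existence.
Variables (R : realType) (I : finType) (n : nat).
Local Notation V := 'rV[R]_n.
Implicit Types (lbl : I -> seq bool) (f : R -> I -> V).

Lemma selection_near_nonconstant lbl c d f y :
  (forall lbl' c' d' f', (lbl_pairs lbl' < lbl_pairs lbl)%N ->
     lbl_continuous lbl' (seg c' d') f' -> exists F, selection lbl' (seg c' d') f' F) ->
  lbl_continuous lbl (seg c d) f -> c <= y <= d -> ~ lbl_constant lbl (f y) ->
  exists2 de : R, 0 < de &
    exists F, selection lbl (seg c d `&` [set x | `|x - y| <= de]) f F.
Proof.
move=> IH fcont Jy nCy; have [i0 /existsNP[j0 /not_implyP[lij nij]]] :
  exists i, ~ forall j, lbl i = lbl j -> f y i = f y j by apply/existsNP.
set p := f y i0; have [r r0 gap] := exists_gap (f y).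
have e0 : 0 < r / 4 by rewrite divr_gt0.
have [de de0 hde] := fcont y Jy _ e0.
have tex z : exists t : {perm I}, c <= z <= d /\ `|z - y| < de ->
    lbl_preserving lbl t /\ forall i, `|f z (t i) - f y i| < r / 4.
  have [[Jz zy]|] := pselect (c <= z <= d /\ `|z - y| < de); last by exists 1%g.
  have [s hs es] := hde z Jz zy; exists s^-1%g => _; split; first exact: lbl_preservingV.
  by move=> i; have := es (s^-1 i)%g; rewrite permKV.
have [t ht] := choice tex.
set c' := Num.max c (y - de / 2); set d' := Num.min d (y + de / 2).
have J'J z : c' <= z <= d' -> c <= z <= d /\ `|z - y| < de.
  rewrite ge_max le_min => /andP[/andP[cz yz] /andP[zd zy]].
  by rewrite cz zd ltr_norml; split=> //; apply/andP; split; lra.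
have [F sF] : exists F, selection (fun i => (f y i == p) :: lbl i) (seg c' d')
    (fun z i => f z (t z i)) F.
  have nj0 : f y j0 != p by apply/eqP => /esym.
  apply: IH.
    by apply: (lbl_pairs_cons (i := i0) (j := j0)); rewrite // eqxx (negbTE nj0).
  apply: lbl_continuous_refine r0 _ (lbl_continuous_sub _ fcont) _.
  - by move=> i /gap; rewrite /p.
  - by move=> z /J'J [].
  - by move=> z /J'J /ht.
exists (de / 2); first by rewrite divr_gt0.
exists F; apply: selection_sub (selection_unrefine _ sF); last by move=> z /J'J /ht [].
move=> z [/andP[cz zd]]; rewrite /= ler_norml => /andP[h1 h2].
by rewrite ge_max le_min cz zd /=; apply/andP; split; lra.
Qed.

Lemma selection_exists lbl c d f :
  lbl_continuous lbl (seg c d) f -> exists F, selection lbl (seg c d) f F.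
Proof.
have [N] := ubnP (lbl_pairs lbl); elim: N => // N IH in lbl c d f * => /ltnSE hN fcont.
apply: selection_from_local => // y [Jy nCy].
apply: selection_near_nonconstant => // lbl' c' d' f' lt'.
by apply: IH; apply: leq_trans lt' hN.
Qed.

End Existence.

Section RealAnalysis.
Variables (R : realType) (W : normedModType R).

Lemma eq0_of_norm_lt (w : W) : (forall e : R, 0 < e -> `|w| < e) -> w = 0.
Proof.
move=> h; apply/eqP; rewrite -normr_eq0; apply/negPn/negP => w0.
have w0' : 0 < `|w| by rewrite lt_neqAle eq_sym w0 normr_ge0.
by have := h _ w0'; rewrite ltxx.
Qed.

Lemma eps_continuous_punctured (J : set R) (h : R -> W) x0 r e d :
  0 < r -> (forall x, `|x - x0| < r -> J x) -> eps_continuous J h -> 0 < e -> 0 < d ->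
  exists x, 0 < `|x - x0| < d /\ `|h x - h x0| < e.
Proof.
move=> r0 ballJ hc e0 d0.
have Jx0 : J x0 by apply: ballJ; rewrite subrr normr0.
have [dh dh0 hdh] := hc x0 Jx0 e e0.
set m := Num.min d (Num.min dh r).
have m0 : 0 < m by rewrite !lt_min d0 dh0 r0.
have xm : `|x0 + m / 2 - x0| = m / 2 by rewrite addrAC subrr add0r gtr0_norm ?divr_gt0.
have [md mdh mr] : [/\ m <= d, m <= dh & m <= r] by split; rewrite !ge_min lexx ?orbT.
exists (x0 + m / 2); rewrite xm divr_gt0 //=; split; first lra.
by apply: hdh; rewrite ?xm; [apply: ballJ; rewrite xm|]; lra.
Qed.

Lemma eps_continuous_dist (J : set R) (h : R -> W) (w : W) :
  eps_continuous J h -> eps_continuous J (fun x => `|h x - w| : R).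
Proof.
move=> hc x Jx e e0; have [d d0 hd] := hc x Jx e e0; exists d => // y Jy yx.
apply: le_lt_trans (ler_dist_dist _ _) _; rewrite opprB addrA subrK.
exact: hd.
Qed.

Lemma derivable_of_affine_approx (G : R -> W) x0 (c v : W) :
  (forall e, 0 < e -> exists2 d, 0 < d & forall x, 0 < `|x - x0| < d ->
     `|G x - (c + x *: v)| < e * `|x - x0|) ->
  G x0 = c + x0 *: v -> derivable G x0 1.
Proof.
move=> hG hG0; apply/cvg_ex; exists v; apply/cvgrPdist_lt => e e0.
have [d d0 hd] := hG e e0.
rewrite near_withinE; apply/nbhs_ballP; exists d => //= h.
rewrite /ball /= sub0r normrN => hdh h0.
have -> : h%:A = h by rewrite /GRing.scale /= mulr1.
set w := G (h + x0) - (c + (h + x0) *: v).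
have -> : G (h + x0) - G x0 = w + h *: v.
  by rewrite hG0 /w scalerDl (addrC (h *: v)) addrA [in RHS]opprD [in RHS]addrA subrK.
rewrite scalerDr scalerA mulVf // scale1r opprD addrA addrAC subrr add0r normrN.
rewrite normrZ normrV ?unitfE // mulrC ltr_pdivrMr ?normr_gt0 //.
by have := hd (h + x0); rewrite addrK normr_gt0 h0 hdh; apply.
Qed.

End RealAnalysis.

Lemma continuous_sign_stable (R : realType) (h : R -> R) l u m : l <= u ->
  {within `[l, u], continuous h} -> (forall z, l <= z <= u -> h z != m) ->
  (h l < m) = (h u < m).
Proof.
move=> lu hc hm; suff: ~ (Num.min (h l) (h u) <= m <= Num.max (h l) (h u)).
  move=> nI; have [hl|hl] := ltP (h l) m; have [hu|hu] := ltP (h u) m => //.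
    by exfalso; apply: nI; rewrite ge_min le_max (ltW hl) hu orbT.
  by exfalso; apply: nI; rewrite ge_min le_max (ltW hu) hl orbT.
move=> /(IVT lu hc) [z]; rewrite in_itv /= => /hm /eqP; exact.
Qed.

Lemma norm_le_sqdist (R : realType) (n : nat) (u v : 'rV[R]_n) :
  `|u - v| <= Num.sqrt (sqdist u v).
Proof.
rewrite [leLHS]/Num.Def.normr /= mx_normrE; apply: bigmax_le => // -[i j] _ /=.
rewrite (ord1 i) !mxE -sqrtr_sqr ler_sqrt ?sumr_ge0 // => [|k _]; last exact: sqr_ge0.
rewrite /sqdist (bigD1 j) //= lerDl sumr_ge0 // => k _; exact: sqr_ge0.
Qed.

Lemma Gdist_lt_match (R : realType) (Q n : nat) (p q : Qtuple R Q n) (e : R) :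
  Gdist p q < e -> exists s : 'S_Q, forall i, `|p i - q (s i)| < e.
Proof.
rewrite /Gdist.
have [s ->] : exists s, \big[Num.min/Gsq p q 1%g]_(s : 'S_Q) Gsq p q s = Gsq p q s.
  apply: (big_ind (fun v => exists s, v = Gsq p q s)) => [|x y [s1 ->] [s2 ->]|s _].
  - by exists 1%g.
  - by rewrite /Num.min; case: ifP => _; eexists.
  - by exists s.
move=> h; exists s => i; apply: le_lt_trans h.
have sq_ge0 (u w : 'rV[R]_n) : 0 <= sqdist u w by apply: sumr_ge0 => l _; exact: sqr_ge0.
apply: (le_trans (norm_le_sqdist _ _)); rewrite ler_sqrt ?sumr_ge0 // /Gsq.
by rewrite (bigD1 i) //= lerDl sumr_ge0.
Qed.

Section Branches.
Variables (R : realType) (Q n : nat) (a b x0 r : R).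
Variables (g : R -> 'I_Q -> 'rV[R]_n) (A : 'I_Q -> R -> 'rV[R]_n) (v : 'I_Q -> 'rV[R]_n).
Hypothesis ax0b : a < x0 < b.
Hypothesis gcont : forall k, eps_continuous (seg a b) (g^~ k).
Hypothesis gA : forall e : R, 0 < e -> exists2 d : R, 0 < d &
  forall x, a <= x <= b -> 0 < `|x - x0| < d ->
    exists s : 'S_Q, forall k, `|g x k - A (s k) x| < e * `|x - x0|.
Hypothesis Aslope : forall i x, A i x - A i x0 = (x - x0) *: v i.
Hypothesis Astrong : forall i j, A i x0 = A j x0 -> A i = A j.
Hypothesis r0 : 0 < r.
Hypothesis Agap : forall i j, A i x0 != A j x0 -> r <= `|A i x0 - A j x0|.

Lemma exists_center_radius : exists2 de : R, 0 < de & [/\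
  forall x, `|x - x0| < de -> a <= x <= b,
  forall x, 0 < `|x - x0| < de ->
    exists s : 'S_Q, forall k, `|g x k - A (s k) x| < `|x - x0| &
  forall x k j, 0 < `|x - x0| < de -> `|g x k - A j x| < `|x - x0| ->
    `|g x k - A j x0| < r / 4].
Proof.
case/andP: ax0b => ax0 x0b; have [d1 d10 hd1] := gA ltr01.
set K := \sum_i `|v i|.
have K0 : 0 <= K by apply: sumr_ge0.
have vK j : `|v j| <= K by rewrite /K (bigD1 j) //= lerDl sumr_ge0.
set de := Num.min (Num.min (x0 - a) (b - x0)) (Num.min d1 (r / (4 * (K + 1)))).
have de0 : 0 < de by rewrite !lt_min !subr_gt0 ax0 x0b d10 divr_gt0 // mulr_gt0 //; lra.
have [dea deb ded1 der] :
    [/\ de <= x0 - a, de <= b - x0, de <= d1 & de <= r / (4 * (K + 1))].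
  by split; rewrite !ge_min lexx ?orbT.
have deJ x : `|x - x0| < de -> a <= x <= b.
  by rewrite ltr_norml => /andP[? ?]; apply/andP; split; lra.
exists de => //; split=> // [x /andP[xx0 xde]|x k j /andP[xx0 xde] hgA].
  have xd1 : 0 < `|x - x0| < d1 by rewrite xx0 (lt_le_trans xde ded1).
  by have [s hs] := hd1 x (deJ x xde) xd1; exists s => k; rewrite -[X in _ < X]mul1r.
have hA : `|A j x - A j x0| <= K * `|x - x0|.
  by rewrite Aslope normrZ mulrC ler_wpM2r.
have : (K + 1) * `|x - x0| <= r / 4.
  rewrite mulrC -ler_pdivlMr ?ltr_wpDl //; apply: le_trans (ltW xde) (le_trans der _).
  by rewrite invfM mulrA.
have := ler_distD (A j x) (g x k) (A j x0); lra.
Qed.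

Section Radius.
Variable de : R.
Hypothesis de0 : 0 < de.
Hypothesis deJ : forall x, `|x - x0| < de -> a <= x <= b.
Hypothesis gmatch : forall x, 0 < `|x - x0| < de ->
  exists s : 'S_Q, forall k, `|g x k - A (s k) x| < `|x - x0|.
Hypothesis gcenter : forall x k j, 0 < `|x - x0| < de ->
  `|g x k - A j x| < `|x - x0| -> `|g x k - A j x0| < r / 4.

Let center_dichotomy x k j : 0 < `|x - x0| < de ->
  `|g x k - A j x0| < r / 4 \/ 3 * r / 4 < `|g x k - A j x0|.
Proof.
move=> hx; have [s hs] := gmatch hx; have := gcenter hx (hs k).
have [->|ne] := eqVneq (A (s k) x0) (A j x0); first by left.
have := Agap ne; have := ler_distD (g x k) (A (s k) x0) (A j x0).
by rewrite (distrC (A (s k) x0) (g x k)); right; lra.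
Qed.

Let center_ne_half z k j : `|z - x0| < de -> `|g z k - A j x0| != r / 2.
Proof.
move=> hz; have [zx0|zx0] := eqVneq z x0; last first.
  have hz' : 0 < `|z - x0| < de by rewrite hz normr_gt0 subr_eq0 zx0.
  by apply/eqP => h; have := r0; case: (center_dichotomy k j hz'); lra.
(* At [x0] itself, compare with a nearby point where the dichotomy holds. *)
rewrite zx0; have r8 : 0 < r / 8 by rewrite divr_gt0.
have [x [hx gx]] := eps_continuous_punctured de0 deJ (gcont k) r8 de0.
have := ler_distD (g x k) (g x0 k) (A j x0); have := ler_distD (g x0 k) (g x k) (A j x0).
rewrite (distrC (g x0 k) (g x k)) => h1 h2.
by apply/eqP => h; have := r0; case: (center_dichotomy k j hx); lra.
Qed.

Let center_dist_stable k j x y : `|x - x0| < de -> `|y - x0| < de ->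
  (`|g x k - A j x0| < r / 2) = (`|g y k - A j x0| < r / 2).
Proof.
wlog xy : x y / x <= y => [hwlog|hx hy].
  by have [/hwlog//|/ltW/hwlog h hx hy] := leP x y; rewrite h.
have in_ball z : x <= z <= y -> `|z - x0| < de.
  move: hx hy; rewrite !ltr_norml => /andP[? ?] /andP[? ?] /andP[? ?].
  by apply/andP; split; lra.
have sxy : [set z | x <= z <= y] `<=` seg a b by move=> z /in_ball /deJ.
apply: (continuous_sign_stable (h := fun z => `|g z k - A j x0|)) xy _ _.
  rewrite set_itvcc; apply: eps_continuous_within.
  exact: eps_continuous_sub sxy (eps_continuous_dist _ (gcont k)).
by move=> z /in_ball/center_ne_half.
Qed.

Lemma exists_branch_centers : exists s : 'S_Q,
  forall k x, `|x - x0| < de -> `|g x k - A (s k) x0| < r / 2.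
Proof.
have hx1 : 0 < `|x0 + de / 2 - x0| < de.
  have := de0; rewrite addrAC subrr add0r gtr0_norm ?divr_gt0 // => ?.
  by apply/andP; split; lra.
have [s hs] := gmatch hx1; exists s => k x hx.
rewrite (center_dist_stable _ _ hx (proj2 (andP hx1))).
by have := r0; have := gcenter hx1 (hs k); lra.
Qed.

Section Centers.
Variable s1 : 'S_Q.
Hypothesis hs1 : forall k x, `|x - x0| < de -> `|g x k - A (s1 k) x0| < r / 2.

Let branch_approx k e : 0 < e -> exists2 d : R, 0 < d &
  forall x, 0 < `|x - x0| < d -> `|g x k - A (s1 k) x| < e * `|x - x0|.
Proof.
move=> e0; have e'0 : 0 < Num.min e 1 by rewrite lt_min e0 ltr01.
have [d d0 hd] := gA e'0; exists (Num.min de d); first by rewrite lt_min de0 d0.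
move=> x /andP[xx0]; rewrite lt_min => /andP[xde xd].
have hxde : 0 < `|x - x0| < de by rewrite xx0 xde.
have [s hs] := hd x (deJ xde) (introT andP (conj xx0 xd)).
have [me m1] : Num.min e 1 <= e /\ Num.min e 1 <= 1 by split; rewrite ge_min lexx ?orbT.
have hsk : `|g x k - A (s k) x| < `|x - x0|.
  by apply: lt_le_trans (hs k) _; rewrite ler_piMl.
suff <- : A (s k) = A (s1 k) by apply: lt_le_trans (hs k) _; rewrite ler_wpM2r.
apply: Astrong; apply/eqP/negPn/negP => /Agap.
have := ler_distD (g x k) (A (s k) x0) (A (s1 k) x0).
have := gcenter hxde hsk; have := hs1 k xde; have := r0.
by rewrite (distrC (A (s k) x0) (g x k)); lra.
Qed.

Let branch_value k : g x0 k = A (s1 k) x0.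
Proof.
apply/eqP; rewrite -subr_eq0; apply/eqP; apply: eq0_of_norm_lt => e e0.
have [d d0 hd] := branch_approx k ltr01.
set V := `|v (s1 k)|; have V0 : 0 <= V := normr_ge0 _.
have V1 : 0 < 1 + V by lra.
have e2 : 0 < e / 2 by rewrite divr_gt0.
have w0 : 0 < Num.min d (e / 2 / (1 + V)) by rewrite lt_min d0 /=; apply: divr_gt0.
have [x [/andP[xx0 xw] gx]] := eps_continuous_punctured de0 deJ (gcont k) e2 w0.
move: xw; rewrite lt_min => /andP[xd xw].
have := hd x (introT andP (conj xx0 xd)); rewrite mul1r => hgA.
have hA : `|A (s1 k) x - A (s1 k) x0| = `|x - x0| * V by rewrite Aslope normrZ.
have hV : `|x - x0| + `|x - x0| * V < e / 2.
  by rewrite -[X in X + _]mulr1 -mulrDr -ltr_pdivlMr.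
have := ler_distD (g x k) (g x0 k) (A (s1 k) x0).
have := ler_distD (A (s1 k) x) (g x k) (A (s1 k) x0).
by rewrite (distrC (g x0 k) (g x k)) hA; lra.
Qed.

Lemma branch_derivable k : derivable (g^~ k) x0 1.
Proof.
have hAk x : A (s1 k) x = (A (s1 k) x0 - x0 *: v (s1 k)) + x *: v (s1 k).
  by rewrite -addrA (addrC (- _)) -scalerBl -Aslope [RHS]addrC subrK.
apply: (derivable_of_affine_approx (c := A (s1 k) x0 - x0 *: v (s1 k)) (v := v (s1 k)));
  last by rewrite -hAk branch_value.
by move=> e /(branch_approx k) [d d0 hd]; exists d => // x /hd; rewrite -hAk.
Qed.

End Centers.

End Radius.

Lemma branches_derivable k : derivable (g^~ k) x0 1.
Proof.
have [de de0 [deJ gmatch gcenter]] := exists_center_radius.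
have [s1 hs1] := exists_branch_centers de0 deJ gmatch gcenter.
exact: (@branch_derivable de de0 deJ gcenter s1 hs1 k).
Qed.

End Branches.

Unset Implicit Arguments.

Theorem theorem5p2 (R : realType) (Q n : nat) (a b x0 : R)
    (f : R -> Qtuple R Q n) :
  Qcontinuous_on a b f ->
  a < x0 < b ->
  strongly_affinely_approximatable a b f x0 ->
  exists F : 'I_Q -> R -> 'rV[R]_n,
    [/\ forall i, {within `[a, b], continuous (F i)},
        forall x, a <= x <= b -> exists s : 'S_Q, forall i, F i x = f x (s i) &
        forall i, derivable (F i) x0 1].
Proof.
move=> fcont ax0b [A [Aaff fA Astrong]].
have [g [gsel gcont]] : exists g, selection (fun=> [::]) (seg a b) f g.
  apply: selection_exists => x Jx e e0; have [d d0 hd] := fcont x Jx e e0.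
  by exists d => // y Jy yx; have [s hs] := Gdist_lt_match (hd y Jy yx); exists s.
have slope i : exists w, forall x, A i x - A i x0 = (x - x0) *: w.
  have [c [w hw]] := Aaff i; exists w => x.
  by rewrite !hw opprD addrACA subrr add0r scalerBl.
have [v Aslope] := choice slope.
have gA e : 0 < e -> exists2 d : R, 0 < d & forall x, a <= x <= b ->
    0 < `|x - x0| < d -> exists s : 'S_Q, forall k, `|g x k - A (s k) x| < e * `|x - x0|.
  move=> e0; have [d d0 hd] := fA e e0; exists d => // x Jx hx.
  have := hd x Jx hx; rewrite ltr_pdivrMr; last by case/andP: hx.
  move=> /Gdist_lt_match [s hs]; have [p _ hp] := gsel x Jx.
  by exists (p * s)%g => k; rewrite hp permM.
have [r r0 Agap] := exists_gap (fun i => A i x0).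
exists (fun i x => g x i); split.
- by move=> i; rewrite set_itvcc; exact: eps_continuous_within (gcont i).
- by move=> x Jx; have [s _ hs] := gsel x Jx; exists s.
- by move=> i; exact: branches_derivable ax0b gcont gA Aslope Astrong r0 Agap i.
Qed.
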